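(* Let $X$ be a $0$-dimensional space. Then the group $CHom(C_p(X,\mathbb Z),\mathbb Z)$ of continuous homomorphisms $C_p(X,\mathbb Z)\to\mathbb Z$ is isomorphic to the free abelian group $A(X)$: every continuous homomorphism $\phi:C_p(X,\mathbb Z)\to\mathbb Z$ has the form $\phi(f)=\sum_{x\in F}n_xf(x)$ for a finite set $F\subseteq X$ and integers $n_x$, and the map sending $\phi$ to $\sum_{x\in F}n_x x\in A(X)$ is a group isomorphism.
   Context: Spaces are Tikhonov; $0$-dimensional means having a base of clopen sets. $C_p(X,\mathbb Z)$ is the group of continuous functions $X\to\mathbb Z$ ($\mathbb Z$ discrete) with the topology of pointwise convergence; $\mathbb Z$ is discrete. $A(X)$ is the free abelian group on the set $X$. *)

From HB Require Import structures.
From mathcomp Require Import all_boot all_order all_algebra.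
From mathcomp Require Import all_classical all_reals all_analysis.
From mathcomp Require Import freeg.

Set Implicit Arguments.
Unset Strict Implicit.
Unset Printing Implicit Defensive.

Import Order.TTheory GRing.Theory Num.Theory.
Local Open Scope classical_set_scope.
Local Open Scope ring_scope.

Definition Zd : Type := discrete_topology int.

(* C_p(X, Z): functions X -> Z with the topology of pointwise convergence;
   the carrier of C_p(X,Z) is the subspace of continuous functions. *)
Definition ptwsZ (X : topologicalType) := {ptws X -> Zd}.

Definition Cfun (X : topologicalType) : set (ptwsZ X) :=
  [set f | continuous (f : X -> Zd)].

Arguments Cfun : clear implicits.

Definition tychonoff_space (X : topologicalType) :=
  hausdorff_space X /\ completely_regular_space X.

Definition clopen_base (X : topologicalType) :=
  forall (x : X) (U : set X), nbhs x U ->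
    exists V : set X, [/\ clopen V, V x & V `<=` U].

(* phi : C_p(X,Z) -> Z is a continuous group homomorphism (only its
   values on continuous functions matter). *)
Definition CHom (X : topologicalType) (phi : ptwsZ X -> Zd) :=
  (forall f g : ptwsZ X, Cfun X f -> Cfun X g ->
     (phi ((fun x => (f x : int) + (g x : int)) : ptwsZ X) : int)
       = (phi f : int) + (phi g : int))
  /\ {within Cfun X, continuous phi}.

Definition AX (X : topologicalType) := {freeg X / int}.

Definition pairing (X : topologicalType) (a : AX X) (f : ptwsZ X) : int :=
  \sum_(x <- dom a) coeff x a * (f x : int).

From HB Require Import structures.
From mathcomp Require Import all_boot all_order all_algebra.
From mathcomp Require Import all_classical all_reals all_analysis.
From mathcomp Require Import freeg.

Import Order.TTheory GRing.Theory Num.Theory.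
Local Open Scope classical_set_scope.
Local Open Scope ring_scope.

(* A basic pointwise neighbourhood of f0 in C_p(X,Z) consists of the functions
   agreeing with f0 on a finite set.  A continuous homomorphism phi is locally
   constant at 0, so there is a finite F such that phi kills every continuous
   function vanishing on F; by additivity phi(f) depends only on f restricted
   to F.  As X is T1 and zero-dimensional, each x in F has a clopen indicator
   e_x with e_x(x) = 1 vanishing on F \ {x}; f agrees on F with
   sum_x f(x) e_x, whence phi(f) = sum_x phi(e_x) f(x).  The same indicators
   recover the coefficients of a in A(X) from the homomorphism it induces,
   which makes a |-> pairing a injective. *)

Definition addZ {T : topologicalType} (f g : ptwsZ T) : ptwsZ T :=
  fun x => (f x : int) + (g x : int).

Section ContinuousIntegerFunctions.
Context {T : topologicalType}.
Implicit Types (f g : ptwsZ T).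

Lemma CfunP f : Cfun T f <-> forall x, \forall y \near x, f y = f x.
Proof.
split=> cf x; first by have /discrete_cvg := cf x.
by apply/discrete_cvg; exact: cf.
Qed.

Lemma Cfun_const (c : int) : Cfun T ((fun _ => c) : ptwsZ T).
Proof. by apply/CfunP => x; apply: nearW. Qed.

Lemma Cfun_comp (h : int -> int) {f : ptwsZ T} :
  Cfun T f -> Cfun T ((fun x => h (f x : int)) : ptwsZ T).
Proof.
by move=> /CfunP cf; apply/CfunP => x; apply: filterS (cf x) => y /= ->.
Qed.

Lemma Cfun_add {f g} : Cfun T f -> Cfun T g -> Cfun T (addZ f g).
Proof.
move=> /CfunP cf /CfunP cg; apply/CfunP => x.
by apply: filterS (filterI (cf x) (cg x)) => y [/= fy gy]; rewrite /addZ fy gy.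
Qed.

Lemma Cfun_sum {I : Type} (s : seq I) (h : I -> ptwsZ T) :
  (forall i, Cfun T (h i)) ->
  Cfun T ((fun y => \sum_(i <- s) (h i y : int)) : ptwsZ T).
Proof.
move=> ch; elim: s => [|i s IHs].
  by under [X in Cfun T X]funext => y do rewrite big_nil; exact: Cfun_const.
by under [X in Cfun T X]funext => y do rewrite big_cons; exact: Cfun_add.
Qed.

Lemma Cfun_indicator (V : set T) :
  clopen V -> Cfun T ((fun y => if `[< V y >] then 1 else 0) : ptwsZ T).
Proof.
move=> [oV cV]; apply/CfunP => y; have [Vy|nVy] := pselect (V y).
  by apply: filterS (open_nbhs_nbhs (conj oV Vy)) => z Vz /=; rewrite !asboolT.
apply: filterS (open_nbhs_nbhs (conj (closed_openC cV) nVy)) => z Vz /=.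
by rewrite !asboolF.
Qed.

End ContinuousIntegerFunctions.

Section PointwiseNeighbourhoods.
Context {T : topologicalType}.

Definition agree_on_finite (f0 : ptwsZ T) : set_system (ptwsZ T) :=
  [set U | exists F : seq T, [set g : ptwsZ T | {in F, g =1 f0}] `<=` U].

Lemma agree_on_finite_filter f0 : Filter (agree_on_finite f0).
Proof.
constructor; first by exists [::].
  move=> U V [F FU] [G GV]; exists (F ++ G) => g agr.
  by split; [apply: FU | apply: GV] => x xF; apply: agr;
    rewrite mem_cat xF ?orbT.
by move=> U V UV [F FU]; exists F => g /FU /UV.
Qed.

Lemma nbhs_ptws_agree (F : seq T) (f0 : ptwsZ T) :
  nbhs f0 [set g : ptwsZ T | {in F, g =1 f0}].
Proof.
have nbhs_f0 : Filter (nbhs f0) := @nbhs_filter {ptws T -> Zd} f0.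
elim: F => [|w F IHF]; first by apply: filterS filterT => g _ x.
have agree_w : nbhs f0 [set g : ptwsZ T | g w = f0 w].
  apply: (@proj_continuous T (fun _ => Zd) w f0 [set f0 w]).
  by apply: open_nbhs_nbhs; split => //; exact: (@discrete_open Zd).
apply: filterS (filterI agree_w IHF) => g [gw gF] x.
by rewrite inE => /predU1P[->|/gF].
Qed.

Lemma nbhs_ptwsZE (f0 : ptwsZ T) : nbhs f0 = agree_on_finite f0.
Proof.
rewrite funeqE => U; rewrite propeqE; split=> [|[F FU]]; last first.
  by apply: filterS FU (nbhs_ptws_agree F f0).
move=> [P [[Q Qfin <-] [V QV Vf0]] VU].
have [L LQ VL] := Qfin _ QV.
suff [F FV] : agree_on_finite f0 V by exists F => g /FV Vg; apply: VU; exists V.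
rewrite -VL; apply: (filter_bigI (agree_on_finite_filter f0)) => M LM.
have /LQ/set_mem [w _ [N _ NM]] := LM.
have M_f0 : M f0 by move: Vf0; rewrite -VL; apply.
exists [:: w] => g /(_ w (mem_head _ _)) gw.
by move: M_f0; rewrite -NM /= gw.
Qed.

End PointwiseNeighbourhoods.

Lemma clopen_bump {T : topologicalType} : accessible_space T -> clopen_base T ->
  forall (s : seq T) (x : T), exists e : ptwsZ T,
    [/\ Cfun T e, e x = 1 :> int & {in s, forall y, y != x -> e y = 0 :> int}].
Proof.
move=> T1 zdT s x.
pose A := [set y | y \in s /\ y != x].
have finA : finite_set A by apply: sub_finite_set (finite_seq s) => y [].
have clA : closed A by exact: accessible_finite_set_closed.1 T1 A finA.
have [V [clV Vx VA]] : exists V : set T, [/\ clopen V, V x & V `<=` ~` A].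
  apply: zdT; apply: open_nbhs_nbhs.
  by split; [exact: closed_openC | case=> _ /eqP].
exists (fun y => if `[< V y >] then 1 else 0); split.
- exact: Cfun_indicator.
- by rewrite asboolT.
- by move=> y ys yx /=; rewrite asboolF // => /VA; apply.
Qed.

Section AdditiveOnCfun.
Context {T : topologicalType} {phi : ptwsZ T -> int}.
Hypothesis phiD : forall f g : ptwsZ T, Cfun T f -> Cfun T g ->
  phi (addZ f g) = phi f + phi g.

Lemma Cfun_raddf0 : phi (fun _ => 0) = 0.
Proof.
have := phiD _ _ (Cfun_const 0) (Cfun_const 0).
have -> : addZ ((fun _ => 0) : ptwsZ T) (fun _ => 0) = (fun _ => 0).
  by apply/funext => x; rewrite /addZ addr0.
by move/(congr1 (fun t => t - phi (fun _ => 0))); rewrite subrr addrK.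
Qed.

Lemma Cfun_raddf_sum {I : Type} (s : seq I) (h : I -> ptwsZ T) :
  (forall i, Cfun T (h i)) ->
  phi (fun y => \sum_(i <- s) (h i y : int)) = \sum_(i <- s) phi (h i).
Proof.
move=> ch; elim: s => [|i s IHs].
  under [X in phi X]funext => y do rewrite big_nil.
  by rewrite Cfun_raddf0 big_nil.
under [X in phi X]funext => y do rewrite big_cons.
by rewrite (phiD _ _ (ch i) (Cfun_sum _ _ ch)) IHs big_cons.
Qed.

Lemma Cfun_raddfN f : Cfun T f -> phi (fun x => - (f x : int)) = - phi f.
Proof.
move=> cf; apply/eqP; rewrite -addr_eq0 -phiD //; last exact: Cfun_comp.
have -> : addZ (fun x => - (f x : int)) f = (fun _ => 0).
  by apply/funext => x; rewrite /addZ addNr.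
by rewrite Cfun_raddf0.
Qed.

Lemma Cfun_raddfMz (c : int) f :
  Cfun T f -> phi (fun x => c * (f x : int)) = c * phi f.
Proof.
move=> cf.
have raddfMn (n : nat) : phi (fun x => n%:Z * (f x : int)) = n%:Z * phi f.
  rewrite -natz [RHS]mulr_natl -[in RHS](card_ord n) -sumr_const.
  rewrite -(Cfun_raddf_sum (index_enum 'I_n) (fun _ => f)) //.
  by congr phi; apply/funext => x; rewrite sumr_const card_ord mulr_natl.
case: c => n; first exact: raddfMn.
rewrite NegzE mulNr -raddfMn -Cfun_raddfN; last exact: Cfun_comp.
by congr phi; apply/funext => x; rewrite mulNr.
Qed.

End AdditiveOnCfun.

Section ContinuousHomomorphisms.
Context {T : topologicalType} {phi : ptwsZ T -> Zd}.
Hypothesis phiH : CHom phi.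

Lemma CHom_finite_support : exists F : seq T, forall f g : ptwsZ T,
  Cfun T f -> Cfun T g -> {in F, f =1 g} -> phi f = phi g.
Proof.
have [phiD /subspace_continuousP phi_cont] := phiH.
pose zero : ptwsZ T := fun _ => 0.
have : nbhs zero [set g | Cfun T g -> phi g = phi zero].
  have := (@discrete_cvg Zd _ _ _).1 (phi_cont _ (Cfun_const 0)).
  by apply; apply: fmap_filter.
rewrite nbhs_ptwsZE => -[F F0]; exists F => f g cf cg fg.
have cN := Cfun_comp (fun t => - t) cg; have cB := Cfun_add cf cN.
have -> : f = addZ g (addZ f (fun x => - (g x : int))).
  by apply/funext => x; rewrite /addZ addrC subrK.
rewrite phiD // [phi (addZ f _)]F0 //= ?(Cfun_raddf0 phiD) ?addr0 // => x xF.
by rewrite /addZ fg // subrr.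
Qed.

Lemma CHom_representation : accessible_space T -> clopen_base T ->
  exists (F : seq T) (n : T -> int), uniq F /\
    forall f, Cfun T f -> (phi f : int) = \sum_(x <- F) n x * (f x : int).
Proof.
move=> T1 zdT; have [phiD _] := phiH.
have [F0 phiF0] := CHom_finite_support; pose F := undup F0.
have /choice[e eP] := clopen_bump T1 zdT F.
exists F, (fun x => phi (e x)); split; first exact: undup_uniq.
move=> f cf; pose h x := (fun y => (f x : int) * (e x y : int)) : ptwsZ T.
have ch x : Cfun T (h x) by have [ce _ _] := eP x; exact: Cfun_comp.
have fE : {in F0, f =1 fun y => \sum_(x <- F) (h x y : int)}.
  move=> y; rewrite -mem_undup => yF; have [_ ey _] := eP y.
  rewrite (bigD1_seq y) ?undup_uniq //= /h ey mulr1 big1_seq ?addr0 //.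
  by move=> x /andP[xy xF]; have [_ _ ->] := eP x; rewrite ?mulr0 // eq_sym.
rewrite (phiF0 _ _ cf (Cfun_sum _ _ ch) fE) (Cfun_raddf_sum phiD) //.
apply: eq_bigr => x _; have [ce _ _] := eP x.
by rewrite (Cfun_raddfMz phiD) // mulrC.
Qed.

End ContinuousHomomorphisms.

Section Pairing.
Context {T : topologicalType}.
Implicit Types (a b : AX T) (f g : ptwsZ T).

Lemma pairing_seqE {s : seq T} a f : uniq s -> {subset dom a <= s} ->
  pairing a f = \sum_(x <- s) coeff x a * (f x : int).
Proof.
move=> us sub; rewrite (bigID (mem (dom a))) /= [X in _ + X]big1 ?addr0.
  rewrite -big_filter; apply/perm_big/uniq_perm; rewrite ?filter_uniq ?uniq_dom //.
  by move=> x; rewrite mem_filter andb_idr //; apply: sub.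
by move=> x /coeff_outdom ->; rewrite mul0r.
Qed.

Lemma pairing0 f : pairing 0 f = 0.
Proof. by rewrite /pairing dom0 big_nil. Qed.

Lemma pairingD a b f : pairing (a + b) f = pairing a f + pairing b f.
Proof.
pose s := undup (dom a ++ dom b ++ dom (a + b)).
have us : uniq s := undup_uniq _.
rewrite !(pairing_seqE _ _ us) -?big_split /=;
  try by move=> x xd; rewrite mem_undup !mem_cat xd ?orbT.
by apply: eq_bigr => x _; rewrite coeffD mulrDl.
Qed.

Lemma pairingU (c : int) (x : T) f : pairing << c *g x >> f = c * (f x : int).
Proof.
rewrite (pairing_seqE (s := [:: x])) // ?big_seq1 ?coeffU ?eqxx ?mulr1 //.
move=> y; rewrite mem_dom coeffU mem_seq1.
by have [//|_] := eqVneq y x; rewrite mulr0 eqxx.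
Qed.

Lemma pairing_CHom a : CHom (fun f => (pairing a f : Zd)).
Proof.
split=> [f g _ _ | ].
  by rewrite -big_split; apply: eq_bigr => x _; rewrite mulrDr.
apply/subspace_continuousP => f _; apply/discrete_cvg.
rewrite nbhs_ptwsZE; exists (dom a) => g agr _.
by apply: eq_big_seq => x xa; rewrite /= agr.
Qed.

Lemma pairing_inj a b : accessible_space T -> clopen_base T ->
  (forall f, Cfun T f -> pairing a f = pairing b f) -> a = b.
Proof.
move=> T1 zdT ab; apply/eqP/freeg_eqP => x.
pose s := undup (dom a ++ dom b); have us : uniq s := undup_uniq _.
have sa : {subset dom a <= s} by move=> y ya; rewrite mem_undup mem_cat ya.
have sb : {subset dom b <= s} by move=> y yb; rewrite mem_undup mem_cat yb orbT.
have [xs|xs] := boolP (x \in s); last first.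
  by rewrite !coeff_outdom //; apply: contra xs; [exact: sb | exact: sa].
have [e [ce ex e0]] := clopen_bump T1 zdT s x.
have pairing_e c : {subset dom c <= s} -> pairing c e = coeff x c.
  move=> sc; rewrite (pairing_seqE _ _ us sc) (bigD1_seq x) //= ex mulr1.
  by rewrite big1_seq ?addr0 // => y /andP[yx ys]; rewrite e0 ?mulr0.
by rewrite -pairing_e // ab // pairing_e.
Qed.

Lemma pairing_sumU (F : seq T) (n : T -> int) f :
  pairing (\sum_(x <- F) << n x *g x >>) f = \sum_(x <- F) n x * (f x : int).
Proof.
rewrite (big_morph (fun a => pairing a f) (fun a b => pairingD a b f)
  (pairing0 f)).
by apply: eq_bigr => x _; rewrite pairingU.
Qed.

End Pairing.

Theorem lemma5p2 (X : topologicalType) (tychX : tychonoff_space X)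
    (zdX : clopen_base X) :
  (* every continuous homomorphism has the form f |-> sum_{x in F} n_x f(x) *)
  (forall phi : ptwsZ X -> Zd, CHom phi ->
     exists (F : seq X) (n : X -> int),
       uniq F /\
       forall f, Cfun X f -> (phi f : int) = \sum_(x <- F) n x * (f x : int))
  /\
  (* the map A(X) -> CHom(C_p(X,Z),Z), a |-> pairing a, is well defined,
     additive, and bijective (hence phi |-> sum n_x x is an isomorphism) *)
  (forall a : AX X, CHom (fun f => (pairing a f : Zd)))
  /\ (forall (a b : AX X) f, pairing (a + b) f = pairing a f + pairing b f)
  /\ (forall phi : ptwsZ X -> Zd, CHom phi ->
        exists! a : AX X, forall f, Cfun X f -> (phi f : int) = pairing a f).
Proof.
have T1 := hausdorff_accessible tychX.1.
split; first by move=> phi /CHom_representation; apply.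
split; first exact: pairing_CHom.
split; first exact: pairingD.
move=> phi /CHom_representation/(_ T1 zdX) [F [n [_ phiE]]].
exists (\sum_(x <- F) << n x *g x >>); split=> [f cf | b phibE].
  by rewrite phiE // pairing_sumU.
apply: pairing_inj T1 zdX _ => f cf.
by rewrite -phibE // phiE // pairing_sumU.
Qed.
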